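(* Let $F,\Gamma$ be convergence spaces and $R\subseteq F\times\Gamma$ a relation that is closed in the product convergence, and fix a subset $A\subseteq R$. Suppose $H:\Gamma\to\Gamma$ satisfies $(f,H(\gamma))\in R$ for all $(f,\gamma)\in A$. If $H$ is continuous at $\gamma\in\Gamma$, then for every $f\in F$, $$(f,\gamma)\in\overline{A}\ \Rightarrow\ (f,H(\gamma))\in R.\qquad(1)$$ Suppose moreover that $(f,H(\gamma))\in A$ (rather than just $R$) for all $(f,\gamma)\in A$, and that $(f,H(\gamma))\in R$ implies $(f,\gamma)\in R$. If $H$ is continuous at $\gamma$, and $(f,\gamma)\in\overline{A}$ for every $f\in F_{\overline A}$ such that $(f,\gamma)\in R$, then for every $f\in F$, $$(f,\gamma)\in\overline{A}\ \Leftrightarrow\ (f,H(\gamma))\in\overline{A}.\qquad(2)$$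
   Context: A net is a map $I\to X$ from a directed set $I$; $(y_j)_{j\in J}$ is a subnet of $(x_i)_{i\in I}$ if for each $i_0\in I$ there is $j_0\in J$ with $\{y_j\}_{j\ge j_0}\subseteq\{x_i\}_{i\ge i_0}$. A convergence space is a set with a relation $(x_i)\to x$ between nets and points such that: constant nets converge to their value; if $(x_i)\to x$ then every subnet converges to $x$; if $(x_i)_{i\in I}\to x$, $(y_i)_{i\in I}\to x$ and $z_i\in\{x_i,y_i\}$ for all $i$, then $(z_i)\to x$. The product convergence on $F\times\Gamma$: $((f_i,\gamma_i))\to(f,\gamma)$ iff $(f_i)\to f$ and $(\gamma_i)\to\gamma$. For a subset $B$, $\overline{B}$ is the set of limits of nets with values in $B$, and $B$ is closed if $\overline B=B$. $H$ is continuous at $\gamma$ if $(\gamma_i)\to\gamma$ implies $(H(\gamma_i))\to H(\gamma)$. For a relation $B\subseteq F\times\Gamma$, $F_B=\{f\in F:\exists\gamma,\ (f,\gamma)\in B\}$. *)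

Set Implicit Arguments.

Record directed_set : Type := DirectedSet {
  dcarrier :> Type;
  dle : dcarrier -> dcarrier -> Prop;
  dle_refl : forall i, dle i i;
  dle_trans : forall i j k, dle i j -> dle j k -> dle i k;
  dle_directed : forall i j, exists k, dle i k /\ dle j k;
  dinhabited : inhabited dcarrier
}.

Definition subnet {X : Type} (I J : directed_set) (x : I -> X) (y : J -> X) : Prop :=
  forall i0 : I, exists j0 : J, forall j : J, dle J j0 j ->
    exists i : I, dle I i0 i /\ y j = x i.

Record convergence_space : Type := ConvergenceSpace {
  cs_carrier :> Type;
  cs_conv : forall I : directed_set, (I -> cs_carrier) -> cs_carrier -> Prop;
  cs_const : forall (I : directed_set) (x : cs_carrier), cs_conv I (fun _ => x) x;
  cs_subnet : forall (I J : directed_set) (x : I -> cs_carrier) (y : J -> cs_carrier)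
      (l : cs_carrier), cs_conv I x l -> @subnet cs_carrier I J x y -> cs_conv J y l;
  cs_mix : forall (I : directed_set) (x y z : I -> cs_carrier) (l : cs_carrier),
      cs_conv I x l -> cs_conv I y l -> (forall i, z i = x i \/ z i = y i) ->
      cs_conv I z l
}.

Definition prod_conv (F G : convergence_space) (I : directed_set)
  (n : I -> F * G) (p : F * G) : Prop :=
  cs_conv F I (fun i => fst (n i)) (fst p) /\ cs_conv G I (fun i => snd (n i)) (snd p).

Definition prod_closure (F G : convergence_space) (B : F * G -> Prop) (p : F * G) : Prop :=
  exists (I : directed_set) (n : I -> F * G),
    (forall i, B (n i)) /\ prod_conv F G I n p.

Definition prod_closed (F G : convergence_space) (B : F * G -> Prop) : Prop :=
  forall p, prod_closure F G B p <-> B p.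

Definition continuous_at (G : convergence_space) (H : G -> G) (g : G) : Prop :=
  forall (I : directed_set) (n : I -> G), cs_conv G I n g ->
    cs_conv G I (fun i => H (n i)) (H g).

Definition first_proj {F G : Type} (B : F * G -> Prop) (f : F) : Prop :=
  exists g, B (f, g).


(* Applying [id x H] to a net of [A] converging to [(f, g)] gives, by continuity
   of [H] at [g], a net converging to [(f, H g)] whose points lie in [R]
   (resp. in [A]); the converse in (2) goes through the closedness of [R] and
   the hypothesis that [R (f, H g)] implies [R (f, g)]. *)

Section ProdClosure.

Context {F G : convergence_space}.

Lemma prod_closure_sub {B C : F * G -> Prop} :
  (forall p, B p -> C p) ->
  forall p, prod_closure F G B p -> prod_closure F G C p.
Proof.
  intros BC p [I [n [Bn conv]]].
  exists I, n. split; [intro i; apply BC, Bn | exact conv].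
Qed.

Lemma prod_closed_closure_sub {B R : F * G -> Prop} :
  prod_closed F G R -> (forall p, B p -> R p) ->
  forall p, prod_closure F G B p -> R p.
Proof.
  intros Rcl BR p Bp. apply (proj1 (Rcl p)).
  exact (prod_closure_sub BR p Bp).
Qed.

Lemma prod_closure_map_snd {B C : F * G -> Prop} {H : G -> G} {g : G} :
  (forall f g', B (f, g') -> C (f, H g')) ->
  continuous_at G H g ->
  forall f, prod_closure F G B (f, g) -> prod_closure F G C (f, H g).
Proof.
  intros BC Hcont f [I [n [Bn [conv_fst conv_snd]]]].
  exists I, (fun i => (fst (n i), H (snd (n i)))). split.
  - intro i. apply BC. specialize (Bn i). destruct (n i). exact Bn.
  - split; simpl.
    + exact conv_fst.
    + apply Hcont. exact conv_snd.
Qed.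

End ProdClosure.

Theorem theorem3p1 (F G : convergence_space) (R A : F * G -> Prop)
  (H : G -> G) (g : G) :
  prod_closed F G R ->
  (forall p, A p -> R p) ->
  ((forall f g', A (f, g') -> R (f, H g')) ->
   continuous_at G H g ->
   forall f : F, prod_closure F G A (f, g) -> R (f, H g))
  /\
  ((forall f g', A (f, g') -> A (f, H g')) ->
   (forall f g', R (f, H g') -> R (f, g')) ->
   continuous_at G H g ->
   (forall f : F, first_proj (prod_closure F G A) f -> R (f, g) ->
      prod_closure F G A (f, g)) ->
   forall f : F, prod_closure F G A (f, g) <-> prod_closure F G A (f, H g)).
Proof.
  intros Rcl AR. split.
  - intros AHR Hcont f Af.
    apply (proj1 (Rcl (f, H g))).
    exact (prod_closure_map_snd AHR Hcont f Af).
  - intros AHA RH Hcont closure_of_R f. split.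
    + exact (prod_closure_map_snd AHA Hcont f).
    + intros AfH. apply closure_of_R.
      * exists (H g). exact AfH.
      * apply RH. exact (prod_closed_closure_sub Rcl AR _ AfH).
Qed.
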